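(* Let $f$ be an L-additive arithmetic function with $h_f(n)\neq0$ for all $n\ge1$. Then for every positive integer $n$, $$\Lambda_f(n)=\sum_{d\mid n}\mu\!\left(\frac nd\right)\frac{f(d)}{h_f(d)}=-\sum_{d\mid n}\frac{\mu(d)f(d)}{h_f(d)},$$ i.e. $\Lambda_f=\mu\ast\frac{f}{h_f}=-\,\mathbf 1\ast\frac{\mu f}{h_f}$.
   Context: An arithmetic function $f$ is L-additive if there is a completely multiplicative arithmetic function $h_f$ such that $f(mn)=f(m)h_f(n)+f(n)h_f(m)$ for all positive integers $m,n$. The generalized von Mangoldt function of $f$ is $\Lambda_f(n)=f(p)/h_f(p)$ if $n=p^k$ for some prime $p$ and integer $k\ge1$, and $\Lambda_f(n)=0$ otherwise. $\mu$ is the Möbius function, $\mathbf 1(n)=1$, and the Dirichlet convolution is $(u\ast v)(n)=\sum_{d\mid n}u(d)v(n/d)$; quotients/products of functions are pointwise. *)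

(* Arithmetic functions take values in an arbitrary field R
   (e.g. the complex numbers); only their values at positive integers matter. *)
From mathcomp Require Import all_boot all_order all_algebra.
Set Implicit Arguments. Unset Strict Implicit. Unset Printing Implicit Defensive.
Import Order.TTheory GRing.Theory Num.Theory.
Local Open Scope ring_scope.

(* Moebius function (mu 0 is irrelevant; set to 0). *)
Definition moebius (R : nzRingType) (n : nat) : R :=
  if (0 < n)%N && all (fun p => logn p n == 1)%N (primes n)
  then (-1) ^+ size (primes n) else 0.

Definition completely_multiplicative (R : nzRingType) (h : nat -> R) : Prop :=
  h 1%N = 1 /\ forall m n : nat, (0 < m)%N -> (0 < n)%N -> h (m * n)%N = h m * h n.

Definition L_additive_wrt (R : nzRingType) (f h : nat -> R) : Prop :=
  completely_multiplicative h /\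
  forall m n : nat, (0 < m)%N -> (0 < n)%N -> f (m * n)%N = f m * h n + f n * h m.

Definition is_prime_power (n : nat) : bool :=
  [exists p : 'I_n.+1, [exists k : 'I_n.+1, prime p && (0 < k)%N && (n == p ^ k)%N]].

(* generalized von Mangoldt function: f(p)/h_f(p) if n = p^k, k>=1, else 0.
   For a prime power n, pdiv n is its unique prime divisor p. *)
Definition gen_vonMangoldt (R : fieldType) (f h : nat -> R) (n : nat) : R :=
  if is_prime_power n then f (pdiv n) / h (pdiv n) else 0.

From mathcomp Require Import all_boot all_order all_algebra.
From mathcomp Require Import ring.
Import GRing.Theory.

Set Implicit Arguments.
Unset Strict Implicit.
Unset Printing Implicit Defensive.

(* Put g := f / h_f.  Dividing the L-additivity relation
   f(mn) = f(m) h(n) + f(n) h(m) by h(mn) = h(m) h(n) shows that g is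
   completely additive: g(mn) = g(m) + g(n), hence g(1) = 0; moreover
   Lambda_f(n) = g(p) when n = p^k is a prime power.  The theorem is thus a
   statement about completely additive functions g:
   (a) sum_{d|n} mu(d) g(d) = - Lambda_g(n).  Write n = p^k m with p = pdiv n
       and p coprime to m.  Divisors of n with p^2 | d do not contribute, the
       others are e and p e with e | m, and mu(p e) g(p e) = -mu(e)(g(p)+g(e)),
       so the sum collapses to -g(p) sum_{e|m} mu(e) = -g(p) [m = 1].
   (b) sum_{d|n} mu(n/d) g(d) = sum_{d|n} mu(d) (g(n) - g(d))
       = g(n) [n = 1] - sum_{d|n} mu(d) g(d), and g(1) = 0.
   The file first develops divisor sums (splitting along a prime, reversal
   d -> n/d), then the description of prime powers through pdiv, then the
   needed facts about mu (including sum_{d|n} mu(d) = [n = 1]), then (a) and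
   (b), and finally derives the theorem. *)

Lemma divnKK n d : (0 < n)%N -> d %| n -> n %/ (n %/ d) = d.
Proof. by move=> n0 dn; rewrite divnA // mulKn. Qed.

Lemma divisors_coprime_part p k m : prime p -> coprime p m -> (0 < m)%N ->
  perm_eq [seq d <- divisors (p ^ k * m) | ~~ (p %| d)] (divisors m).
Proof.
move=> pp cpm m0; have n0 : (0 < p ^ k * m)%N by rewrite muln_gt0 expn_gt0 prime_gt0.
apply: uniq_perm; rewrite ?filter_uniq ?divisors_uniq // => d.
rewrite mem_filter -!dvdn_divisors //; apply/andP/idP => [[npd dvd]|dm].
  have cd : coprime d (p ^ k) by rewrite coprime_sym coprimeXl // prime_coprime.
  by rewrite -(Gauss_dvdr _ cd).
split; last exact: dvdn_mull.
by apply: contraL cpm => pd; rewrite prime_coprime // (dvdn_trans pd dm).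
Qed.

Lemma divisors_multiple p n : prime p -> p %| n -> (0 < n)%N ->
  perm_eq [seq d <- divisors n | p %| d] (map (muln p) (divisors (n %/ p))).
Proof.
move=> pp pn n0; have p0 := prime_gt0 pp.
have np0 : (0 < n %/ p)%N by rewrite divn_gt0 // dvdn_leq.
apply: uniq_perm; rewrite ?filter_uniq ?divisors_uniq //.
  by rewrite map_inj_uniq ?divisors_uniq // => x y /eqP; rewrite eqn_pmul2l // => /eqP.
move=> d; rewrite mem_filter -!dvdn_divisors //; apply/andP/mapP => [[pd dn]|[e]].
  by exists (d %/ p); rewrite -?dvdn_divisors ?dvdn_divLR ?divnK // mulnC divnK.
rewrite -dvdn_divisors // => en ->.
by rewrite dvdn_mulr //= -(divnK pn) (mulnC (n %/ p)) dvdn_pmul2l.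
Qed.

Lemma sum_divisors_pfactor (V : nmodType) (F : nat -> V) p k m :
  prime p -> coprime p m -> (0 < m)%N -> (0 < k)%N ->
  (forall e, F (p * (p * e))%N = 0%R) ->
  (\sum_(d <- divisors (p ^ k * m)) F d
    = \sum_(e <- divisors m) F e + \sum_(e <- divisors m) F (p * e)%N)%R.
Proof.
move=> pp cpm m0 k0 F0; have p0 := prime_gt0 pp.
have n0 : (0 < p ^ k * m)%N by rewrite muln_gt0 expn_gt0 p0.
have pn : p %| p ^ k * m by rewrite dvdn_mulr // dvdn_exp.
rewrite (bigID (fun d => p %| d)) /= addrC.
rewrite -[X in (X + _)%R]big_filter -[X in (_ + X)%R]big_filter.
rewrite (perm_big _ (divisors_coprime_part _ pp cpm m0)).
rewrite (perm_big _ (divisors_multiple pp pn n0)) big_map; congr (_ + _)%R.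
case: k k0 {n0 pn} => // k _; rewrite expnS -mulnA mulKn //.
rewrite (bigID (fun d => p %| d)) /= big1 ?add0r.
  by rewrite -big_filter (perm_big _ (divisors_coprime_part _ pp cpm m0)).
by move=> e /divnK <-; rewrite (mulnC _ p) F0.
Qed.

Lemma sum_divisors_rev (V : nmodType) (F : nat -> V) n : (0 < n)%N ->
  (\sum_(d <- divisors n) F d = \sum_(d <- divisors n) F (n %/ d)%N)%R.
Proof.
move=> n0; rewrite -(big_map (fun d => n %/ d)%N xpredT F); apply: perm_big.
apply: uniq_perm; rewrite ?divisors_uniq //.
  rewrite map_inj_in_uniq ?divisors_uniq // => x y.
  by rewrite -!dvdn_divisors // => xn yn E; rewrite -(divnKK n0 xn) E divnKK.
move=> x; apply/idP/mapP => [|[d]]; rewrite -dvdn_divisors //.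
  by move=> xn; exists (n %/ x)%N; rewrite ?divnKK // -dvdn_divisors ?dvdn_div.
by move=> dn ->; rewrite -dvdn_divisors ?dvdn_div.
Qed.

Lemma divisors1 : divisors 1 = [:: 1%N].
Proof. by []. Qed.

Lemma is_prime_power1 : is_prime_power 1 = false.
Proof.
apply/negbTE/existsP => -[p /existsP [k /andP[/andP[pp k0] /eqP E]]].
by have := ltn_expl k (prime_gt1 pp); rewrite -E; case: (nat_of_ord k) k0 => [|[]].
Qed.

Lemma pdiv_factor n : (1 < n)%N -> exists m,
  [/\ prime (pdiv n), coprime (pdiv n) m, (0 < m)%N, (0 < logn (pdiv n) n)%N
   & n = pdiv n ^ logn (pdiv n) n * m]%N.
Proof.
move=> n1; have n0 : (0 < n)%N by apply: ltnW.
have pp := pdiv_prime n1; have [m cpm En] := pfactor_coprime pp n0.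
exists m; split; rewrite 1?mulnC //.
  by move: n0; rewrite {1}En muln_gt0 => /andP[].
by rewrite logn_gt0 mem_primes pp n0 pdiv_dvd.
Qed.

Lemma is_prime_powerE n m : (0 < n)%N -> prime (pdiv n) -> (0 < logn (pdiv n) n)%N ->
  n = (pdiv n ^ logn (pdiv n) n * m)%N -> is_prime_power n = (m == 1%N).
Proof.
set p := pdiv n; set k := logn p n => n0 pp k0 En.
apply/existsP/eqP => [[[q _] /existsP [[j _] /= /andP[/andP[qp j0] /eqP Eq]]] | m1].
  have pq : p = q by rewrite /p Eq -(prednK j0) pdiv_pfactor.
  have kj : k = j by rewrite /k pq Eq pfactorK.
  move/eqP: En; rewrite {1}Eq pq kj -{1}(muln1 (q ^ j)).
  by rewrite eqn_pmul2l ?expn_gt0 ?prime_gt0 // eq_sym => /eqP.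
move: En; rewrite m1 muln1 => En.
have pn : (p < n.+1)%N by rewrite ltnS dvdn_leq // pdiv_dvd.
have kn : (k < n.+1)%N by rewrite ltnS [X in (_ <= X)%N]En ltnW // ltn_expl // prime_gt1.
exists (Ordinal pn); apply/existsP; exists (Ordinal kn).
by rewrite /= pp k0 /= {1}En.
Qed.

Local Open Scope ring_scope.

Section Moebius.
Variable R : nzRingType.

Lemma moebius1 : moebius R 1 = 1.
Proof. by rewrite /moebius. Qed.

Lemma moebius_prime_mul p e : prime p -> (0 < e)%N -> coprime p e ->
  moebius R (p * e)%N = - moebius R e.
Proof.
move=> pp e0 cpe; have p0 := prime_gt0 pp.
have npe : p \notin primes e by rewrite mem_primes pp e0 -prime_coprime.
have Epr : perm_eq (primes (p * e)) (p :: primes e).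
  apply: uniq_perm; rewrite /= ?npe ?primes_uniq // => q.
  by rewrite primesM // primes_prime // !in_cons in_nil orbF.
have lp : logn p (p * e) = 1%N by rewrite lognM // logn_prime // eqxx logn_coprime.
rewrite /moebius muln_gt0 p0 e0 (perm_size Epr) (perm_all _ Epr) /= lp eqxx /=.
have -> : all (fun q => logn q (p * e) == 1)%N (primes e)
        = all (fun q => logn q e == 1)%N (primes e).
  apply: eq_in_all => q qe.
  have qp : (q == p) = false by apply: contraNF npe => /eqP <-.
  by rewrite lognM // logn_prime // qp.
by case: ifP => _; rewrite ?oppr0 // exprS mulN1r.
Qed.

Lemma moebius_prime_sq p e : prime p -> moebius R (p * (p * e))%N = 0.
Proof.
move=> pp; have p0 := prime_gt0 pp.
have [-> | e0] := posnP e; first by rewrite !muln0.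
rewrite /moebius; case: ifP => // /andP[_ /allP sqfree].
have pin : p \in primes (p * (p * e)) by rewrite mem_primes pp !muln_gt0 p0 e0 dvdn_mulr.
by move: (sqfree p pin); rewrite !lognM ?muln_gt0 ?p0 // logn_prime // eqxx.
Qed.

Lemma sum_moebius n : (0 < n)%N ->
  \sum_(d <- divisors n) moebius R d = (n == 1%N)%:R.
Proof.
move=> n0; case: (ltngtP n 1) => [|n1|->]; first by rewrite ltnNge n0.
  have [m [pp cpm m0 k0 En]] := pdiv_factor n1.
  rewrite {1}En sum_divisors_pfactor //; last first.
    by move=> e; rewrite moebius_prime_sq.
  rewrite big_seq [X in _ + X]big_seq -big_split /= big1 // => e.
  rewrite -dvdn_divisors // => em.
  by rewrite (moebius_prime_mul pp (dvdn_gt0 m0 em) (coprime_dvdr em cpm)) subrr.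
by rewrite divisors1 big_seq1 moebius1.
Qed.

End Moebius.

Definition completely_additive (V : nmodType) (g : nat -> V) : Prop :=
  forall a b : nat, (0 < a)%N -> (0 < b)%N -> g (a * b)%N = g a + g b.

Definition vonMangoldt (V : nmodType) (g : nat -> V) (n : nat) : V :=
  if is_prime_power n then g (pdiv n) else 0.

Lemma L_additive_ratio (R : fieldType) (f h : nat -> R) :
  L_additive_wrt f h -> (forall n : nat, (0 < n)%N -> h n != 0) ->
  completely_additive (fun d => f d / h d).
Proof.
move=> [[_ hM] fM] hnz a b a0 b0; rewrite fM // hM //.
by field; rewrite !hnz.
Qed.

Section AdditiveSums.
Variables (R : nzRingType) (g : nat -> R).
Hypothesis gA : completely_additive g.

(* g(1) = g(1 * 1) = 2 g(1). *)
Lemma completely_additive1 : g 1%N = 0.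
Proof. by apply: (addrI (g 1%N)); rewrite addr0 -gA. Qed.

Lemma sum_moebius_additive n : (0 < n)%N ->
  \sum_(d <- divisors n) moebius R d * g d = - vonMangoldt g n.
Proof.
rewrite /vonMangoldt => n0; case: (ltngtP n 1) => [|n1|->]; first by rewrite ltnNge n0.
  have [m [pp cpm m0 k0 En]] := pdiv_factor n1.
  set p := pdiv n in pp cpm k0 En *.
  rewrite (is_prime_powerE n0 pp k0 En) {1}En sum_divisors_pfactor //; last first.
    by move=> e; rewrite moebius_prime_sq // mul0r.
  rewrite -big_split /= (eq_big_seq (fun e => - (moebius R e * g p))); last first.
    move=> e; rewrite -dvdn_divisors // => em; have e0 := dvdn_gt0 m0 em.
    rewrite (moebius_prime_mul _ pp e0 (coprime_dvdr em cpm)) (gA (prime_gt0 pp) e0).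
    by rewrite mulNr mulrDr opprD addrCA subrr addr0.
  rewrite sumrN -mulr_suml sum_moebius //.
  by case: eqP => _; rewrite ?mul1r ?mul0r ?oppr0.
by rewrite divisors1 big_seq1 is_prime_power1 completely_additive1 mulr0 oppr0.
Qed.

Lemma sum_moebius_additive_rev n : (0 < n)%N ->
  \sum_(d <- divisors n) moebius R (n %/ d)%N * g d
    = - \sum_(d <- divisors n) moebius R d * g d.
Proof.
move=> n0; rewrite (sum_divisors_rev _ n0).
rewrite (eq_big_seq (fun d => moebius R d * g n - moebius R d * g d)); last first.
  move=> d; rewrite -dvdn_divisors // => dn; rewrite divnKK //.
  have d0 := dvdn_gt0 n0 dn.
  have q0 : (0 < n %/ d)%N by rewrite divn_gt0 // dvdn_leq.
  have gn : g n = g (n %/ d)%N + g d by rewrite -gA // divnK.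
  by rewrite gn mulrDr addrK.
rewrite sumrB -mulr_suml sum_moebius //.
by case: eqP => [->|_]; rewrite ?completely_additive1 ?mulr0 ?mul0r add0r.
Qed.

End AdditiveSums.

Lemma gen_vonMangoldtE (R : fieldType) (f h : nat -> R) (n : nat) :
  gen_vonMangoldt f h n = vonMangoldt (fun d => f d / h d) n.
Proof. by []. Qed.

Theorem theorem3p2 (R : fieldType) (f h : nat -> R) :
  L_additive_wrt f h ->
  (forall n : nat, (0 < n)%N -> h n != 0) ->
  forall n : nat, (0 < n)%N ->
    gen_vonMangoldt f h n
      = \sum_(d <- divisors n) moebius R (n %/ d)%N * (f d / h d)
    /\ gen_vonMangoldt f h n
      = - \sum_(d <- divisors n) moebius R d * f d / h d.
Proof.
move=> fL hnz n n0; have gA := L_additive_ratio fL hnz.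
have -> : \sum_(d <- divisors n) moebius R d * f d / h d
        = \sum_(d <- divisors n) moebius R d * (f d / h d).
  by apply: eq_bigr => d _; rewrite mulrA.
rewrite sum_moebius_additive_rev // sum_moebius_additive // opprK.
by rewrite gen_vonMangoldtE.
Qed.
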